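(* Suppose the conditional gradient algorithm chooses $\theta_k$ by the exact line search \[ \theta_k\in\arg\min_{\theta\in[0,1]}\{(1-\theta)\mathrm{gap}(x_k,g_k)+\mathcal{D}(x_k,s_k,\theta)\}, \] and suppose $q>1$, $r\in[0,1]$ are such that $(\mathcal D,\mathrm{gap})$ satisfies the $(q,r)$-growth property with some finite constant $M>0$. Then for $k=0,1,\dots$ \[ \mathrm{gap}_{k+1}\le \mathrm{gap}_k\Big(1-\tfrac{q-1}{q}\min\Big\{1,\Big(\tfrac{\mathrm{gap}_k^{1-r}}{M}\Big)^{\frac1{q-1}}\Big\}\Big). \] If $r=1$ then $\mathrm{gap}_k\le \mathrm{gap}_0\big(1-\frac{q-1}{q}\min\{1,M^{-1/(q-1)}\}\big)^k$ for all $k$. If $r\in[0,1)$ then $\mathrm{gap}_k\le\mathrm{gap}_0\big(1-\frac{q-1}{q}\big)^k$ for $k=0,1,\dots,k_0$, where $k_0$ is the smallest $k$ with $\mathrm{gap}_k^{1-r}\le M$, and for all $k\ge k_0$ \[ \mathrm{gap}_k\le\Big(\mathrm{gap}_{k_0}^{\frac{r-1}{q-1}}+\frac{1-r}{q}\cdot\frac{1}{M^{\frac1{q-1}}}\,(k-k_0)\Big)^{\frac{q-1}{r-1}}. \]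
   Context: Let $f,\Psi:\mathbb{R}^n\to\mathbb{R}\cup\{\infty\}$ be closed proper convex functions such that (A1) $f$ is differentiable on $\mathrm{dom}(\Psi)$, and (A2) for every $x\in\mathrm{dom}(f)$ the set $\arg\min_s\{\langle\nabla f(x),s\rangle+\Psi(s)\}$ is nonempty. $f^*,\Psi^*$ denote convex conjugates; $\arg\min_y\{\langle g,y\rangle+\Psi(y)\}=\partial\Psi^*(-g)$. $D_f(y,x)=f(y)-f(x)-\langle\nabla f(x),y-x\rangle$. Duality gap: $\mathrm{gap}(x,u)=f(x)+\Psi(x)+f^*(u)+\Psi^*(-u)$ for $x\in\mathrm{dom}(\Psi)$, $u\in\mathrm{dom}(f^* )$. For $x,s\in\mathrm{dom}(\Psi)$, $\theta\in[0,1]$: $\mathcal{D}(x,s,\theta)=D_f(x+\theta(s-x),x)+\Psi(x+\theta(s-x))-(1-\theta)\Psi(x)-\theta\Psi(s)$. Conditional gradient algorithm: given $x_0\in\mathrm{dom}(\Psi)$, for $k=0,1,2,\dots$ let $g_k=\nabla f(x_k)$, pick $s_k\in\arg\min_y\{\langle g_k,y\rangle+\Psi(y)\}$ and $\theta_k\in[0,1]$, and set $x_{k+1}=(1-\theta_k)x_k+\theta_k s_k$. The best duality gaps are $\mathrm{gap}_k=\min_{i=0,\dots,k}\mathrm{gap}(x_k,g_i)$. $(q,r)$-growth property ($q>1$, $r\in[0,1]$): there is a finite $M>0$ such that for all $x\in\mathrm{dom}(\Psi)$, $g=\nabla f(x)$ and $s\in\partial\Psi^*(-g)$, $\mathcal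 D(x,s,\theta)\le \frac{M\theta^q}{q}\mathrm{gap}(x,g)^r$ for all $\theta\in[0,1]$. *)

From HB Require Import structures.
From mathcomp Require Import all_boot all_order all_algebra.
From mathcomp Require Import all_classical all_reals all_analysis.
Set Implicit Arguments. Unset Strict Implicit. Unset Printing Implicit Defensive.
Import Order.TTheory GRing.Theory Num.Theory.
Import numFieldNormedType.Exports.
Local Open Scope classical_set_scope.
Local Open Scope ring_scope.

Section Defs.
Variables (R : realType) (n : nat).
Local Notation V := 'rV[R]_n.

Definition dot (x y : V) : R := \sum_(i < n) x ord0 i * y ord0 i.

Definition dom (h : V -> \bar R) : set V := [set x | (h x < +oo)%E].

(* closed = lower semicontinuous = closed epigraph *)
Definition closed_fun (h : V -> \bar R) : Prop :=
  closed [set p : V * R | (h p.1 <= p.2%:E)%E].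

Definition proper_fun (h : V -> \bar R) : Prop :=
  (forall x, h x != -oo%E) /\ (exists x, (h x < +oo)%E).

Definition convex_fun (h : V -> \bar R) : Prop :=
  forall (x y : V) (t : R), 0 <= t <= 1 ->
    (h (t *: x + (1 - t) *: y)%R <= t%:E * h x + (1 - t)%:E * h y)%E.

Definition cpc (h : V -> \bar R) : Prop :=
  [/\ closed_fun h, proper_fun h & convex_fun h].

Definition is_grad (h : V -> \bar R) (x g : V) : Prop :=
  [/\ \forall y \near x, h y \is a fin_num,
      differentiable (fine \o h) x &
      forall v : V, 'd (fine \o h) x v = dot g v].

Definition conjugate (h : V -> \bar R) (u : V) : \bar R :=
  ereal_sup (range (fun x => ((dot u x)%:E - h x)%E)).

Definition subdiff (h : V -> \bar R) (v : V) : set V :=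
  [set s | h v \is a fin_num /\ forall w, (h v + (dot s (w - v)%R)%:E <= h w)%E].

Definition lin_argmin (Psi : V -> \bar R) (g : V) : set V :=
  [set s | forall y, ((dot g s)%:E + Psi s <= (dot g y)%:E + Psi y)%E].

Definition gap (f Psi : V -> \bar R) (x u : V) : \bar R :=
  (f x + Psi x + conjugate f u + conjugate Psi (- u)%R)%E.

Definition bregman (f : V -> \bar R) (g y x : V) : \bar R :=
  (f y - f x - (dot g (y - x)%R)%:E)%E.

Definition Dcal (f Psi : V -> \bar R) (g x s : V) (theta : R) : \bar R :=
  (bregman f g (x + theta *: (s - x))%R x + Psi (x + theta *: (s - x))%R
   - (1 - theta)%:E * Psi x - theta%:E * Psi s)%E.

Definition growth (f Psi : V -> \bar R) (q r M : R) : Prop :=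
  forall x g s, x \in dom Psi -> is_grad f x g -> s \in subdiff (conjugate Psi) (- g) ->
  forall theta, 0 <= theta <= 1 ->
    (Dcal f Psi g x s theta <= (M * powR theta q / q)%:E * poweR (gap f Psi x g) r)%E.

(* best duality gaps: gap_k = min_{i <= k} gap(x_k, g_i) *)
Definition best_gap (f Psi : V -> \bar R) (x g : nat -> V) (k : nat) : \bar R :=
  \big[Order.min/+oo%E]_(i < k.+1) gap f Psi (x k) (g i).

End Defs.

(* Write G_k := Psi(x_k) - Psi(s_k) + <g_k, x_k - s_k>, which equals gap(x_k, g_k) by the
   Fenchel-Young equalities at g_k = grad f(x_k) and at s_k, and F := f + Psi.  On the segment
   from x_k to s_k one has the identity (1 - t) G_k + D(x_k, s_k, t) = G_k + F(x_k + t (s_k - x_k)) - F(x_k),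
   so the line search and the growth property give F(x_{k+1}) - F(x_k) <= - t G_k + M t^q / q G_k^r
   for every t in [0, 1].  As gap(x_{k+1}, u) - gap(x_k, u) = F(x_{k+1}) - F(x_k) for every u, the
   best gaps satisfy gap_{k+1} <= gap_k - t G_k + M t^q / q G_k^r.  For
   t = min(1, (gap_k^(1-r) / M)^(1/(q-1))) we have M t^(q-1) G_k^r <= gap_k^(1-r) G_k^r <= G_k, so
   gap_{k+1} <= gap_k - (q-1)/q t G_k <= gap_k (1 - (q-1)/q t).  While gap_k^(1-r) > M this is a
   geometric decrease; afterwards it reads b_{k+1} <= b_k (1 - c b_k^p) with p = (1-r)/(q-1), and
   Bernoulli's inequality (1 - y)^(-p) >= 1 + p y gives b_{k+1}^(-p) >= b_k^(-p) + p c. *)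

From HB Require Import structures.
From mathcomp Require Import all_boot all_order all_algebra.
From mathcomp Require Import all_classical all_reals all_analysis.
From mathcomp Require Import ring lra.
Set Implicit Arguments. Unset Strict Implicit. Unset Printing Implicit Defensive.
Import Order.TTheory GRing.Theory Num.Theory.
Import numFieldNormedType.Exports.
Local Open Scope classical_set_scope.
Local Open Scope ring_scope.

Section ConvexDuality.
Variables (R : realType) (n : nat).
Local Notation V := 'rV[R]_n.

Lemma dotC (a b : V) : dot a b = dot b a.
Proof. by rewrite /dot; apply: eq_bigr => i _; rewrite mulrC. Qed.

Lemma dotDr (a b c : V) : dot a (b + c) = dot a b + dot a c.
Proof. by rewrite /dot -big_split; apply: eq_bigr => i _; rewrite mxE mulrDr. Qed.

Lemma dotNr (a b : V) : dot a (- b) = - dot a b.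
Proof. by rewrite /dot -sumrN; apply: eq_bigr => i _; rewrite mxE mulrN. Qed.

Lemma dotBr (a b c : V) : dot a (b - c) = dot a b - dot a c.
Proof. by rewrite dotDr dotNr. Qed.

Lemma dotZr (a b : V) t : dot a (t *: b) = t * dot a b.
Proof. by rewrite /dot mulr_sumr; apply: eq_bigr => i _; rewrite mxE mulrCA. Qed.

Lemma dotNl (a b : V) : dot (- b) a = - dot b a.
Proof. by rewrite dotC dotNr dotC. Qed.

Lemma grad_fin (f : V -> \bar R) x d : is_grad f x d -> f x \is a fin_num.
Proof. by case=> + _ _; apply: nbhs_singleton. Qed.

Lemma proper_dom_fin (h : V -> \bar R) y : proper_fun h -> y \in dom h -> h y \is a fin_num.
Proof. by case=> ph _; rewrite in_setE /dom /= => hy; rewrite fin_numE ph /= -ltey. Qed.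

Lemma convex_grad_le (f : V -> \bar R) x d y :
  convex_fun f -> proper_fun f -> is_grad f x d ->
  (f x + (dot d (y - x))%:E <= f y)%E.
Proof.
move=> cf [pf _] gr.
have fx := grad_fin gr.
case: (ltP (f y) +oo%E) => [fyoo|]; last by rewrite leye_eq => /eqP ->; rewrite leey.
have fy : f y \is a fin_num by rewrite fin_numE pf /= -ltey.
set v := y - x.
have chord t : 0 < t <= 1 ->
    fine (f (t *: v + x)) <= t * fine (f y) + (1 - t) * fine (f x).
  move=> /andP[t0 t1].
  have := cf y x t; rewrite t1 ltW //= => /(_ isT).
  have -> : t *: y + (1 - t) *: x = t *: v + x.
    by rewrite /v scalerBr scalerBl scale1r [x - _]addrC addrA.
  rewrite -(fineK fy) -(fineK fx) -!EFinM -EFinD => h.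
  have fz : f (t *: v + x) \is a fin_num.
    by rewrite fin_numE pf /= -ltey; apply: (le_lt_trans h); rewrite ltry.
  by rewrite -lee_fin (fineK fz).
case: gr => _ dif dd.
have quot : (fun h => h^-1 *: ((fine \o f \o shift x) (h *: v) - (fine \o f) x)) @ 0^'+
     --> 'D_v (fine \o f) x.
  exact: (cvg_dnbhs_at_right (diff_derivable dif)).
rewrite -(fineK fx) -(fineK fy) -EFinD lee_fin -lerBrDl -(dd v) -deriveE //.
rewrite -(cvg_lim _ quot) //.
apply: limr_le; first exact: cvgP quot.
near=> t.
have t0 : 0 < t by near: t; exact: nbhs_right_gt.
have t1 : t <= 1 by near: t; exact: nbhs_right_le.
rewrite /= /shift.
have := chord t; rewrite t0 t1 => /(_ isT) h.
rewrite -[_ *: _]/(t^-1 * _) ler_pdivrMl // mulrBr.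
rewrite mulrBl mul1r in h; lra.
Unshelve. all: by end_near.
Qed.

Lemma fenchel_young (h : V -> \bar R) u y : ((dot u y)%:E - h y <= conjugate h u)%E.
Proof. by apply: ereal_sup_ubound; exists y. Qed.

Lemma lin_argmin_dom (Psi : V -> \bar R) d y s0 : proper_fun Psi -> y \in dom Psi ->
  s0 \in lin_argmin Psi d -> s0 \in dom Psi.
Proof.
move=> pP yd; rewrite in_setE /lin_argmin => /(_ y).
rewrite in_setE /dom /=; move: (pP.1 s0).
case: (Psi s0) => [a| |] // _; first by rewrite ltry.
by rewrite addey // -(fineK (proper_dom_fin pP yd)) -EFinD leye_eq.
Qed.

Lemma conjugate_at_lin_argmin (Psi : V -> \bar R) d s0 : proper_fun Psi ->
  s0 \in lin_argmin Psi d -> Psi s0 \is a fin_num ->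
  conjugate Psi (- d) = (dot (- d) s0 - fine (Psi s0))%:E.
Proof.
move=> [pP _] hs fs; apply/le_anti/andP; split; last first.
  by rewrite EFinB (fineK fs); apply: fenchel_young.
apply/ereal_supP => _ [y _ <-].
move: hs; rewrite in_setE /lin_argmin => /(_ y).
move: (pP y); case: (Psi y) => [a| |] // _; last by rewrite /= leNye.
rewrite -[Psi s0](fineK fs) -!EFinD -?EFinB !lee_fin !dotNl /= => h; lra.
Qed.

Lemma conjugate_at_grad (f : V -> \bar R) x d : convex_fun f -> proper_fun f ->
  is_grad f x d -> conjugate f d = (dot d x - fine (f x))%:E.
Proof.
move=> cf pf gr; have fx := grad_fin gr.
apply/le_anti/andP; split; last by rewrite EFinB (fineK fx); apply: fenchel_young.
apply/ereal_supP => _ [y _ <-].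
have := convex_grad_le y cf pf gr.
move: (pf.1 y); case: (f y) => [a| |] // _; last by rewrite /= leNye.
rewrite -[f x](fineK fx) -!EFinD -?EFinB !lee_fin dotBr => h; lra.
Qed.

Lemma lin_argmin_subdiff_conjugate (Psi : V -> \bar R) d s0 : proper_fun Psi ->
  s0 \in lin_argmin Psi d -> Psi s0 \is a fin_num ->
  s0 \in subdiff (conjugate Psi) (- d).
Proof.
move=> pP hs fs; rewrite in_setE /subdiff (conjugate_at_lin_argmin pP hs fs).
split => // w; apply: le_trans (fenchel_young Psi w s0).
rewrite -[Psi s0](fineK fs) -EFinD -?EFinB lee_fin.
rewrite opprK dotDr dotNl (dotC s0 w) (dotC s0 d); lra.
Qed.

Lemma gap_ge0 (f Psi : V -> \bar R) y u : f y \is a fin_num -> Psi y \is a fin_num ->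
  (0 <= gap f Psi y u)%E.
Proof.
move=> fy py; rewrite /gap.
apply: le_trans (leeD (leeD (lexx (f y + Psi y)) (fenchel_young f u y))
                      (fenchel_young Psi (- u) y)).
rewrite -[f y](fineK fy) -[Psi y](fineK py) -!EFinB -!EFinD lee_fin dotNl; lra.
Qed.

(* The dual part of the gap does not depend on the primal point. *)
Lemma gap_shift_point (f Psi : V -> \bar R) y z u a b a' b' :
  f y = a%:E -> Psi y = b%:E -> f z = a'%:E -> Psi z = b'%:E ->
  gap f Psi z u = (gap f Psi y u + ((a' + b') - (a + b))%:E)%E.
Proof.
rewrite /gap => -> -> -> ->; rewrite -!EFinD [RHS]addeC !addeA -!EFinD.
by congr (_ + _ + _)%E; congr EFin; ring.
Qed.

End ConvexDuality.

Section PowerInequalities.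
Variable R : realType.
Implicit Types (a b c p x y : R).

Lemma powRV x p : 0 <= x -> powR x^-1 p = powR x (- p).
Proof. by move=> x0; rewrite -powR_inv1 // -powRrM mulN1r. Qed.

Lemma bernoulli_powR x p : 0 <= x < 1 -> 0 < p -> 1 + p * x <= powR (1 - x) (- p).
Proof.
move=> /andP[x0 x1] p0.
rewrite /powR ifF; last by apply/negbTE; rewrite subr_eq0 gt_eqF.
apply: le_trans (expR_ge1Dx _); rewrite lerD2l mulNr -mulrN ler_pM2l //.
have := @le_ln1Dx R (- x); rewrite ltrN2 x1 => /(_ isT).
by rewrite lerNr.
Qed.

Lemma powRN_le x y p : 0 < x -> x <= y -> 0 <= p -> powR y (- p) <= powR x (- p).
Proof.
move=> x0 xy p0; rewrite !powRN lef_pV2 ?posrE ?powR_gt0 //; last exact: lt_le_trans xy.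
by apply: ge0_ler_powR => //; rewrite nnegrE ltW //; exact: lt_le_trans xy.
Qed.

Lemma powRNK x p : 0 < x -> p != 0 -> powR (powR x (- p)) (- p^-1) = x.
Proof. by move=> x0 p0; rewrite -powRrM mulrNN mulfV // powRr1 // ltW. Qed.

Lemma powR_interpolate_le a b r : 0 <= a <= b -> 0 <= r <= 1 ->
  powR a (1 - r) * powR b r <= b.
Proof.
move=> /andP[a0 ab] /andP[r0 r1]; have b0 := le_trans a0 ab.
apply: (@le_trans _ _ (powR b (1 - r) * powR b r)).
  apply: ler_wpM2r; first exact: powR_ge0.
  by apply: ge0_ler_powR => //; rewrite ?subr_ge0 // nnegrE.
by rewrite -powRD ?subrK ?oner_eq0 // powRr1.
Qed.

Lemma powRN_increment x x' c p : 0 < c -> 0 < p -> 0 < x -> 0 < x' ->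
  x' <= x * (1 - c * powR x p) -> c * powR x p < 1 ->
  powR x (- p) + p * c <= powR x' (- p).
Proof.
move=> c0 p0 x0 x'0 hx hc.
have cxp : 0 < 1 - c * powR x p by rewrite subr_gt0.
apply: le_trans (powRN_le x'0 hx (ltW p0)).
rewrite powRM ?(ltW x0) ?(ltW cxp) //.
have := @bernoulli_powR (c * powR x p) p.
rewrite mulr_ge0 ?(ltW c0) ?powR_ge0 //= hc => /(_ isT p0) hB.
apply: le_trans (ler_wpM2l (powR_ge0 _ _) hB).
have xpK : powR x (- p) * powR x p = 1.
  by rewrite powRN mulVf // gt_eqF // powR_gt0.
rewrite (_ : _ * (1 + _) = powR x (- p) + p * c * (powR x (- p) * powR x p)); last by ring.
by rewrite xpK mulr1.
Qed.

End PowerInequalities.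

Section OneStep.
Variables (R : realType) (q r M : R).
Hypotheses (q1 : 1 < q) (r01 : 0 <= r <= 1) (M0 : 0 < M).

(* The minimizer of t |-> - t + M t^q / (q b^(1-r)), clipped at 1. *)
Definition growth_step (b : R) : R :=
  Num.min 1 (powR (powR b (1 - r) * M^-1) (1 / (q - 1))).

Lemma growth_step_ge0 b : 0 <= growth_step b.
Proof. by rewrite le_min ler01 powR_ge0. Qed.

Lemma growth_step_le1 b : growth_step b <= 1.
Proof. by rewrite ge_min lexx. Qed.

Lemma growth_step_powR_le b : 0 <= b -> M * powR (growth_step b) (q - 1) <= powR b (1 - r).
Proof.
move=> b0; set a := powR (powR b (1 - r) * M^-1) (1 / (q - 1)).
have ma : growth_step b <= a by rewrite ge_min lexx orbT.
have : powR (growth_step b) (q - 1) <= powR a (q - 1).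
  apply: ge0_ler_powR; rewrite ?nnegrE ?growth_step_ge0 ?powR_ge0 //.
  by rewrite subr_ge0 ltW.
rewrite /a -powRrM mul1r mulVf ?subr_eq0 ?gt_eqF // powRr1; last first.
  by rewrite mulr_ge0 ?powR_ge0 // invr_ge0 ltW.
by rewrite -(ler_pM2l M0) mulrCA mulfV ?gt_eqF // mulr1.
Qed.

Lemma growth_step_r1 b : r = 1 -> growth_step b = Num.min 1 (powR M (-1 / (q - 1))).
Proof. by rewrite /growth_step => ->; rewrite subrr powRr0 mul1r powRV ?mulNr // ltW. Qed.

Lemma growth_step_large b : M <= powR b (1 - r) -> growth_step b = 1.
Proof.
move=> Mb; rewrite /growth_step; apply/min_l.
have h1 : 1 <= powR b (1 - r) * M^-1 by rewrite ler_pdivlMr // mul1r.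
have := @ler_powR _ _ h1 0 (1 / (q - 1)); rewrite powRr0; apply.
by rewrite divr_ge0 // subr_ge0 ltW.
Qed.

Lemma growth_step_small b : 0 <= b -> powR b (1 - r) <= M ->
  growth_step b = powR b ((1 - r) / (q - 1)) * powR M (- 1 / (q - 1)).
Proof.
move=> b0 bM; rewrite /growth_step min_r; last first.
  apply: (@le_trans _ _ (powR 1 (1 / (q - 1)))); last by rewrite powR1.
  apply: ge0_ler_powR.
  - by rewrite divr_ge0 // subr_ge0 ltW.
  - by rewrite nnegrE mulr_ge0 ?powR_ge0 // invr_ge0 ltW.
  - by rewrite nnegrE.
  - by rewrite ler_pdivrMr // mul1r.
rewrite powRM ?powR_ge0 ?invr_ge0 ?(ltW M0) // powRV ?(ltW M0) // -powRrM.
by congr (powR _ _ * powR _ _); ring.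
Qed.

Lemma growth_descent (b G b' : R) : 0 <= b <= G ->
  (forall t, 0 <= t <= 1 -> b' <= b - t * G + M * powR t q / q * powR G r) ->
  b' <= b * (1 - (q - 1) / q * growth_step b).
Proof.
move=> /andP[b0 bG] H.
have q0 : 0 < q := lt_trans ltr01 q1.
set m := growth_step b.
have m0 : 0 <= m := growth_step_ge0 b.
apply: (le_trans (H m _)); first by rewrite m0 growth_step_le1.
have mq : powR m q = m * powR m (q - 1).
  transitivity (powR m (1 + (q - 1))); first by rewrite addrC subrK.
  rewrite (@powRD _ m 1 (q - 1)) ?powRr1 //.
  by rewrite addrCA subrr addr0 gt_eqF.
have growth_le : M * powR m q / q * powR G r <= m * G / q.
  rewrite mq (_ : M * _ / q * _ = m / q * (M * powR m (q - 1) * powR G r)); last by ring.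
  rewrite (_ : m * G / q = m / q * G); last by ring.
  apply: ler_wpM2l; first by rewrite divr_ge0 // ltW.
  apply: (@le_trans _ _ (powR b (1 - r) * powR G r)).
    by apply: ler_wpM2r; [exact: powR_ge0 | exact: growth_step_powR_le].
  by apply: powR_interpolate_le; rewrite ?b0 ?bG.
have mb : b * (m * (1 - q^-1)) <= G * (m * (1 - q^-1)).
  by apply: ler_wpM2r => //; rewrite mulr_ge0 // subr_ge0 (invf_le1 q0) ltW.
rewrite mulrBl mulfV ?gt_eqF // mul1r; nra.
Qed.

End OneStep.

Section Rates.
Variables (R : realType) (q r M : R) (b : nat -> R).
Hypotheses (q1 : 1 < q) (r01 : 0 <= r <= 1) (M0 : 0 < M) (b0 : forall k, 0 <= b k).
Hypothesis brec : forall k, b k.+1 <= b k * (1 - (q - 1) / q * growth_step q r M (b k)).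

Lemma contraction_gt0 : 0 < (q - 1) / q.
Proof. by rewrite divr_gt0 ?subr_gt0 // (lt_trans ltr01 q1). Qed.

Lemma contraction_lt1 : (q - 1) / q < 1.
Proof. by rewrite ltr_pdivrMr ?(lt_trans ltr01 q1) // mul1r ltrBlDr ltrDl. Qed.

Lemma rate_factor_ge0 y : 0 <= y <= 1 -> 0 <= 1 - (q - 1) / q * y.
Proof.
move=> /andP[y0 y1]; rewrite subr_ge0.
by apply: le_trans (ltW contraction_lt1); rewrite ger_pMr // contraction_gt0.
Qed.

Lemma rate_nonincreasing k : b k.+1 <= b k.
Proof.
apply: le_trans (brec k) _; rewrite ler_piMr // lerBlDr lerDl.
by rewrite mulr_ge0 ?growth_step_ge0 // ltW // contraction_gt0.
Qed.

Lemma rate_linear : r = 1 -> forall k,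
  b k <= b 0%N * (1 - (q - 1) / q * Num.min 1 (powR M (- 1 / (q - 1)))) ^+ k.
Proof.
move=> r1; elim=> [|k IH]; first by rewrite expr0 mulr1.
apply: le_trans (brec k) _; rewrite growth_step_r1 // exprSr mulrA.
by apply: ler_wpM2r => //; rewrite rate_factor_ge0 // le_min ler01 powR_ge0 ge_min lexx.
Qed.

Lemma rate_before k0 : (forall k, (k < k0)%N -> M < powR (b k) (1 - r)) ->
  forall k, (k <= k0)%N -> b k <= b 0%N * (1 - (q - 1) / q) ^+ k.
Proof.
move=> large; elim=> [|k IH] kk0; first by rewrite expr0 mulr1.
apply: le_trans (brec k) _.
rewrite growth_step_large //; last exact/ltW/large.
rewrite mulr1 exprSr mulrA; apply: ler_wpM2r; last exact/IH/ltnW.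
by rewrite subr_ge0 ltW // contraction_lt1.
Qed.

Lemma sublinear_rate (k0 : nat) (c p : R) : 0 < c -> 0 < p ->
  (forall k, (k0 <= k)%N -> b k.+1 <= b k * (1 - c * powR (b k) p)) ->
  (forall k, (k0 <= k)%N -> c * powR (b k) p < 1) ->
  forall k, (k0 <= k)%N -> b k <= powR (powR (b k0) (- p) + p * c * (k - k0)%:R) (- p^-1).
Proof.
move=> c0 p0 hb hc k kk0.
have [bk0|bk0] := eqVneq (b k0) 0.
  suff -> : b k = 0 by exact: powR_ge0.
  rewrite -(subnKC kk0); elim: (k - k0)%N => [|d IH]; first by rewrite addn0.
  apply: le_anti; rewrite b0 andbT addnS.
  by apply: (le_trans (hb _ (leq_addr _ _))); rewrite IH mul0r.
have {}bk0 : 0 < b k0 by rewrite lt_neqAle eq_sym bk0 b0.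
set A := powR (b k0) (- p).
have vanish_or_grow d : b (k0 + d)%N = 0 \/
    (0 < b (k0 + d)%N /\ A + p * c * d%:R <= powR (b (k0 + d)%N) (- p)).
  elim: d => [|d IH]; first by right; rewrite addn0 mulr0 addr0.
  have [->|bpos] := eqVneq (b (k0 + d.+1)%N) 0; first by left.
  have {}bpos : 0 < b (k0 + d.+1)%N by rewrite lt_neqAle eq_sym bpos b0.
  right; split => //; rewrite addnS in bpos *.
  have hk := hb _ (leq_addr d k0).
  case: IH => [bz|[bkpos IH]].
    by move: hk; rewrite bz mul0r => /(lt_le_trans bpos); rewrite ltxx.
  apply: le_trans (powRN_increment c0 p0 bkpos bpos hk (hc _ (leq_addr d k0))).
  by rewrite mulrS; lra.
have := vanish_or_grow (k - k0)%N; rewrite (subnKC kk0) => -[->|[bkpos H]].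
  exact: powR_ge0.
rewrite -{1}(powRNK bkpos (lt0r_neq0 p0)).
apply: (powRN_le _ H); last by rewrite invr_ge0 ltW.
have A0 : 0 < A by rewrite powR_gt0.
by apply: (lt_le_trans A0); rewrite lerDl !mulr_ge0 // ltW.
Qed.

Lemma rate_after k0 : r < 1 -> powR (b k0) (1 - r) <= M ->
  forall k, (k0 <= k)%N ->
  b k <= powR (powR (b k0) ((r - 1) / (q - 1)) +
               (1 - r) / q * powR M (- 1 / (q - 1)) * (k - k0)%:R) ((q - 1) / (r - 1)).
Proof.
move=> r1 bk0M k kk0.
have q0 : q != 0 by rewrite gt_eqF // (lt_trans ltr01 q1).
have q1' : q - 1 != 0 by rewrite subr_eq0 gt_eqF.
set p := (1 - r) / (q - 1); set Mq := powR M (- 1 / (q - 1)).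
set c := (q - 1) / q * Mq.
have small j : (k0 <= j)%N -> powR (b j) (1 - r) <= M.
  move=> jk0; apply: le_trans bk0M; rewrite -(subnKC jk0).
  apply: ge0_ler_powR; rewrite ?subr_ge0 ?nnegrE ?b0 ?(ltW r1) //.
  elim: (j - k0)%N => [|d IH]; first by rewrite addn0.
  by rewrite addnS; apply: le_trans (rate_nonincreasing _) IH.
have stepE j : (k0 <= j)%N -> (q - 1) / q * growth_step q r M (b j) = c * powR (b j) p.
  by move=> jk0; rewrite growth_step_small ?small // /c -/p -/Mq; ring.
have := @sublinear_rate k0 c p _ _ _ _ k kk0.
have -> : (r - 1) / (q - 1) = - p by rewrite /p -mulNr opprB.
have -> : (1 - r) / q * Mq = p * c.
  rewrite /p /c (_ : _ * (_ * Mq) = (1 - r) / q * Mq * ((q - 1)^-1 * (q - 1))); last by ring.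
  by rewrite mulVf // mulr1.
have -> : (q - 1) / (r - 1) = - p^-1 by rewrite /p invf_div -mulrN -invrN opprB.
apply.
- by rewrite mulr_gt0 ?contraction_gt0 // powR_gt0.
- by rewrite divr_gt0 ?subr_gt0.
- by move=> j jk0; rewrite -stepE.
- move=> j jk0; rewrite -stepE //; apply: le_lt_trans contraction_lt1.
  by rewrite ger_pMr ?contraction_gt0 // growth_step_le1.
Qed.

End Rates.

Section ConditionalGradient.
Variables (R : realType) (n : nat) (f Psi : 'rV[R]_n -> \bar R).
Variables (x g s : nat -> 'rV[R]_n) (theta : nat -> R) (q r M : R).
Hypotheses (f_convex : convex_fun f) (f_proper : proper_fun f).
Hypotheses (Psi_convex : convex_fun Psi) (Psi_proper : proper_fun Psi).
Hypothesis x0_dom : x 0%N \in dom Psi.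
Hypothesis g_grad : forall k, is_grad f (x k) (g k).
Hypothesis s_argmin : forall k, s k \in lin_argmin Psi (g k).
Hypothesis line_search : forall k, 0 <= theta k <= 1 /\
  forall t, 0 <= t <= 1 ->
    ((1 - theta k)%:E * gap f Psi (x k) (g k) + Dcal f Psi (g k) (x k) (s k) (theta k)
     <= (1 - t)%:E * gap f Psi (x k) (g k) + Dcal f Psi (g k) (x k) (s k) t)%E.
Hypothesis x_succ : forall k, x k.+1 = (1 - theta k) *: x k + theta k *: s k.
Hypotheses (q1 : 1 < q) (r01 : 0 <= r <= 1) (M0 : 0 < M) (grow : growth f Psi q r M).

Lemma iterate_dom k : x k \in dom Psi.
Proof.
elim: k => [|k IH]; first exact: x0_dom.
have [/andP[t0 t1] _] := line_search k.
have sk := lin_argmin_dom Psi_proper IH (s_argmin k).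
have := @Psi_convex (x k) (s k) (1 - theta k).
rewrite (_ : 1 - (1 - theta k) = theta k); last by ring.
rewrite subr_ge0 t1 lerBlDr lerDl t0 -x_succ => /(_ isT) h.
rewrite in_setE /dom /=; apply: (le_lt_trans h).
rewrite -(fineK (proper_dom_fin Psi_proper IH)) -(fineK (proper_dom_fin Psi_proper sk)).
by rewrite -!EFinM -EFinD ltry.
Qed.

Lemma f_iterate_fin k : f (x k) \is a fin_num.
Proof. exact: grad_fin (g_grad k). Qed.

Lemma Psi_iterate_fin k : Psi (x k) \is a fin_num.
Proof. exact: proper_dom_fin Psi_proper (iterate_dom k). Qed.

Lemma Psi_argmin_fin k : Psi (s k) \is a fin_num.
Proof. exact/(proper_dom_fin Psi_proper)/(lin_argmin_dom Psi_proper (iterate_dom k)). Qed.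

Definition objective k := fine (f (x k)) + fine (Psi (x k)).

Definition fw_gap k := fine (Psi (x k)) - fine (Psi (s k)) + dot (g k) (x k - s k).

Lemma gap_iterate k : gap f Psi (x k) (g k) = (fw_gap k)%:E.
Proof.
rewrite /gap (conjugate_at_grad f_convex f_proper (g_grad k)).
rewrite (conjugate_at_lin_argmin Psi_proper (s_argmin k) (Psi_argmin_fin k)).
rewrite -[f (x k)](fineK (f_iterate_fin k)) -[Psi (x k)](fineK (Psi_iterate_fin k)).
by rewrite -!EFinD /fw_gap; congr EFin; rewrite dotNl dotBr; ring.
Qed.

Lemma Dcal_line_search k : Dcal f Psi (g k) (x k) (s k) (theta k) =
  (objective k.+1 - objective k + theta k * fw_gap k)%:E.
Proof.
have xS : x k + theta k *: (s k - x k) = x k.+1.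
  by rewrite x_succ scalerBr scalerBl scale1r addrA addrAC.
have dx : x k.+1 - x k = theta k *: (s k - x k) by rewrite -xS addrAC subrr add0r.
rewrite /Dcal /bregman xS dx dotZr.
rewrite -[f (x k)](fineK (f_iterate_fin k)) -[f (x k.+1)](fineK (f_iterate_fin k.+1)).
rewrite -[Psi (x k)](fineK (Psi_iterate_fin k)).
rewrite -[Psi (x k.+1)](fineK (Psi_iterate_fin k.+1)).
rewrite -[Psi (s k)](fineK (Psi_argmin_fin k)) -!EFinM -!EFinB.
by congr EFin; rewrite /objective /fw_gap !dotBr; ring.
Qed.

Lemma objective_descent k t : 0 <= t <= 1 ->
  objective k.+1 - objective k <= - t * fw_gap k + M * powR t q / q * powR (fw_gap k) r.
Proof.
move=> t01; have [_ opt] := line_search k.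
have hgrow := grow (iterate_dom k) (g_grad k)
  (lin_argmin_subdiff_conjugate Psi_proper (s_argmin k) (Psi_argmin_fin k)) t01.
have := le_trans (opt t t01) (leeD2l _ hgrow).
by rewrite gap_iterate poweR_EFin Dcal_line_search -!EFinM -!EFinD lee_fin; lra.
Qed.

Local Notation B := (best_gap f Psi x g).

Lemma best_gap_ge0 k : (0 <= B k)%E.
Proof.
apply/bigmin_geP; split => [|i _]; first exact: leey.
exact: gap_ge0 (f_iterate_fin k) (Psi_iterate_fin k).
Qed.

Lemma best_gap_le_fw_gap k : (B k <= (fw_gap k)%:E)%E.
Proof.
rewrite -gap_iterate.
exact: (bigmin_le _ (@ord_max k) (fun i : 'I_k.+1 => gap f Psi (x k) (g i))).
Qed.

Lemma best_gap_fin k : B k \is a fin_num.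
Proof.
rewrite fin_numE gt_eqF ?(lt_le_trans _ (best_gap_ge0 k)) ?ltNy0 //= -ltey.
exact: le_lt_trans (best_gap_le_fw_gap k) (ltry _).
Qed.

Lemma best_gap_succ k : fine (B k.+1) <= fine (B k) + (objective k.+1 - objective k).
Proof.
have gapS i : gap f Psi (x k.+1) (g i) =
    (gap f Psi (x k) (g i) + (objective k.+1 - objective k)%:E)%E.
  exact: gap_shift_point (esym (fineK (f_iterate_fin k))) (esym (fineK (Psi_iterate_fin k)))
    (esym (fineK (f_iterate_fin k.+1))) (esym (fineK (Psi_iterate_fin k.+1))).
rewrite -lee_fin EFinD !fineK ?best_gap_fin // -leeBlDr //.
apply/bigmin_geP; split => [|i _]; first exact: leey.
rewrite leeBlDr // -gapS.
exact: (bigmin_le _ (widen_ord (leqnSn k.+1) i)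
          (fun i : 'I_k.+2 => gap f Psi (x k.+1) (g i))).
Qed.

Lemma best_gap_contraction k :
  fine (B k.+1) <= fine (B k) * (1 - (q - 1) / q * growth_step q r M (fine (B k))).
Proof.
apply: (growth_descent (G := fw_gap k) q1 r01 M0) => [|t t01].
  by rewrite -!lee_fin fineK ?best_gap_fin // best_gap_ge0 best_gap_le_fw_gap.
by apply: le_trans (best_gap_succ k) _; have := objective_descent k t01; lra.
Qed.

End ConditionalGradient.

Theorem theorem1 (R : realType) (n : nat) (f Psi : 'rV[R]_n -> \bar R)
  (x g s : nat -> 'rV[R]_n) (theta : nat -> R) (q r M : R) :
  cpc f -> cpc Psi ->
  (forall y, y \in dom Psi -> exists d, is_grad f y d) ->
  (forall y d, y \in dom f -> is_grad f y d -> exists s0, s0 \in lin_argmin Psi d) ->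
  x 0%N \in dom Psi ->
  (forall k, is_grad f (x k) (g k)) ->
  (forall k, s k \in lin_argmin Psi (g k)) ->
  (forall k, 0 <= theta k <= 1 /\
     forall t, 0 <= t <= 1 ->
       ((1 - theta k)%:E * gap f Psi (x k) (g k) + Dcal f Psi (g k) (x k) (s k) (theta k)
        <= (1 - t)%:E * gap f Psi (x k) (g k) + Dcal f Psi (g k) (x k) (s k) t)%E) ->
  (forall k, x k.+1 = (1 - theta k) *: x k + theta k *: s k) ->
  1 < q -> 0 <= r <= 1 -> 0 < M -> growth f Psi q r M ->
  [/\ (forall k : nat,
         (best_gap f Psi x g k.+1 <= best_gap f Psi x g k *
            (1%:E - ((q - 1) / q)%:E *
               Order.min 1%E (poweR (poweR (best_gap f Psi x g k) (1 - r) * (M^-1)%:E)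
                                    (1 / (q - 1)))))%E),
      (r = 1 -> forall k : nat,
         (best_gap f Psi x g k <= best_gap f Psi x g 0%N *
            ((1 - (q - 1) / q * Order.min 1 (powR M (- 1 / (q - 1)))) ^+ k)%:E)%E) &
      (r < 1 -> forall k0 : nat,
         (poweR (best_gap f Psi x g k0) (1 - r) <= M%:E)%E ->
         (forall k : nat, (k < k0)%N -> ~ (poweR (best_gap f Psi x g k) (1 - r) <= M%:E)%E) ->
         (forall k : nat, (k <= k0)%N ->
            (best_gap f Psi x g k <= best_gap f Psi x g 0%N * ((1 - (q - 1) / q) ^+ k)%:E)%E) /\
         (forall k : nat, (k0 <= k)%N ->
            (best_gap f Psi x g k <=
               poweR (poweR (best_gap f Psi x g k0) ((r - 1) / (q - 1)) +
                      ((1 - r) / q * powR M (- 1 / (q - 1)) * (k - k0)%:R)%:E)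
                     ((q - 1) / (r - 1)))%E))].
Proof.
(* (A1) and (A2) only make the iteration well defined; here g_k and s_k are given. *)
move=> [_ pf cvf] [_ pP cvP] _ _ x0d gr sarg ls xrec q1 r01 M0 grow.
pose b k := fine (best_gap f Psi x g k).
have eB k : best_gap f Psi x g k = (b k)%:E.
  by rewrite /b fineK // (best_gap_fin cvf pf cvP pP x0d gr sarg ls xrec).
have b0 k : 0 <= b k.
  by rewrite -lee_fin -eB (best_gap_ge0 cvP pP x0d gr sarg ls xrec).
have brec k : b k.+1 <= b k * (1 - (q - 1) / q * growth_step q r M (b k)).
  exact: (best_gap_contraction cvf pf cvP pP x0d gr sarg ls xrec q1 r01 M0 grow).
split.
- by move=> k; rewrite !eB !poweR_EFin -EFin_min -EFinM lee_fin.
- by move=> r1 k; rewrite !eB -EFinM lee_fin; exact: rate_linear q1 M0 brec r1 k.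
- move=> r1 k0; rewrite eB poweR_EFin lee_fin => k0M large; split => k kk0.
    rewrite !eB -EFinM lee_fin; apply: (rate_before q1 M0 brec) kk0 => j jk0.
    by rewrite ltNge; apply/negP; have := large j jk0; rewrite eB poweR_EFin lee_fin.
  rewrite !eB !poweR_EFin lee_fin.
  exact: rate_after.
Qed.
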